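(* For every integer $d\ge 1$ there exists a faithful $1$-weak combinatorial description of $\mathcal{W}_d$ compatible with $\mathrm{MI}_{\mathfrak{S}}$. Concretely: there exist sets $\mathrm{CD}_d(n)$ ($n\ge1$, with trivial $\mathfrak{S}_n$-action), maps $H^n_d:\mathrm{CD}_d(n)\to\mathcal{W}^n_d$ such that $H^n_d(\mathrm{CD}_d(n))$ is a basis of $\mathcal{W}^n_d$, and surjections $q_n:\mathrm{CD}_d(n)\to\mathrm{MI}(n)/\mathfrak{S}_n$ such that $\pi_d(H^n_d(a))=G^n(q_n(a))$ for all $a\in\mathrm{CD}_d(n)$.
   Context: Rooted trees: a rooted tree on $[n]$ is a set $E$ of ordered pairs (an edge $(v,w)$ means $w$ is a child of $v$) such that exactly one vertex (the root) has no parent, every other vertex has exactly one parent, and all vertices are connected to the root by following parents; $\mathrm{RT}(n)$ is the set of these. $\mathcal{C}_d=C^\infty(\mathbb{R}^d,\mathbb{R}^d)$. For $\tau$ with root $r$ whose children are $v_1,\dots,v_k$, recursively $F(\tau)((f^i)_{i})=\sum_{j_1,\dots,j_k=1}^d F(\tau_{v_1})(\cdots)_{j_1}\cdots F(\tau_{v_k})(\cdots)_{j_k}\,\partial_{j_1}\cdots\partial_{j_k}f^r$, with $\tau_{v_m}$ the subtree of $v_m$ and its descendants evaluated on the $f^i$ indexed by its vertices, $(\cdot)_j$ the $j$-th coordinate, $\partial_j=\partial/\partial x_j$ (single vertex: $F(\tau)=f^r$). With a single label ($\ell=1$), the labelled objects of arity $n$ of a sequence $C$ of $\mathfrak{S}_n$-sets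 are $C(n)/\mathfrak{S}_n$, and identification maps are trivial. $\mathcal{W}^n_d$ is the real span of the maps $\mathcal{C}_d\to\mathcal{C}_d$, $f\mapsto F(\tau)(f,\dots,f)$, $\tau\in\mathrm{RT}(n)$. $\mathrm{MI}(n)$ is the set of maps $\varphi:[n]\to\mathbb{N}$ with $\sum_v\varphi(v)=n-1$, $\mathfrak{S}_n$ permuting $[n]$; $\mathrm{MI}_{\mathfrak{S}}(n)=\mathrm{MI}(n)/\mathfrak{S}_n$. For $[\varphi]\in\mathrm{MI}_{\mathfrak{S}}(n)$ and $g\in C^\infty(\mathbb{R},\mathbb{R})$, $G^n([\varphi])(g)=g^{(\varphi(1))}\cdots g^{(\varphi(n))}$. The projection $\pi_d$ sends $\Phi:\mathcal{C}_d\to\mathcal{C}_d$ to $g\mapsto\big(t\mapsto$ first coordinate of $\Phi(\hat g)(t,0,\dots,0)\big)$, where $\hat g(x)=(g(x_1),0,\dots,0)$. A faithful $1$-weak combinatorial description of $\mathcal{W}_d$ is a sequence of $\mathfrak{S}_n$-sets $\mathrm{CD}_d(n)$ with maps $H^n_d:\mathrm{CD}_d(n)/\mathfrak{S}_n\to\mathcal{W}^n_d$ whose image is a basis of $\mathcal{W}^n_d$ for each $n$; compatibility with $\mathrm{MI}_{\mathfrak{S}}$ means surjections $q_n$ onto $\mathrm{MI}_{\mathfrak{S}}(n)$ with $\pi_d\circ H^n_d=G^n\circ q_n$. *)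

From HB Require Import structures.
From mathcomp Require Import all_boot all_order all_algebra.
From mathcomp Require Import all_classical all_reals all_analysis.
Set Implicit Arguments. Unset Strict Implicit. Unset Printing Implicit Defensive.
Import Order.TTheory GRing.Theory Num.Theory.
Local Open Scope ring_scope.

Section Defs.
Variable R : realType.

Definition vec (d : nat) := 'I_d -> R.

Definition upd (d : nat) (x : vec d) (j : 'I_d) (t : R) : vec d :=
  fun i => if i == j then x i + t else x i.

Definition partial (d : nat) (j : 'I_d) (g : vec d -> R) : vec d -> R :=
  fun x => derive1 (fun t => g (upd x j t)) 0.

Definition partials (d : nat) (js : seq 'I_d) (g : vec d -> R) : vec d -> R :=
  foldr (@partial d) g js.

Definition cont_at (d : nat) (g : vec d -> R) (x : vec d) : Prop :=
  forall e : R, 0 < e -> exists2 del : R, 0 < del &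
    forall y : vec d, (forall i, `|y i - x i| < del) -> `|g y - g x| < e.

Definition smooth_scalar (d : nat) (g : vec d -> R) : Prop :=
  forall (js : seq 'I_d) (x : vec d),
    cont_at (partials js g) x /\
    forall j : 'I_d, derivable (fun t => partials js g (upd x j t)) 0 1.

Definition smooth (d : nat) (f : vec d -> vec d) : Prop :=
  forall k : 'I_d, smooth_scalar (fun x => f x k).

Record Cd (d : nat) := MkCd { cd_fun :> vec d -> vec d; cd_smooth : smooth cd_fun }.

Definition smooth1 (g : R -> R) : Prop :=
  forall (m : nat) (t : R), derivable (derive1n m g) t 1.

(** Rooted trees on [n] as edge sets E; (v,w) \in E means w is a child of v. *)
Definition is_root (n : nat) (E : {set 'I_n * 'I_n}) (r : 'I_n) : bool :=
  [forall v, (v, r) \notin E].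

Definition is_rooted_tree (n : nat) (E : {set 'I_n * 'I_n}) : bool :=
  [exists r, [&& is_root E r,
    [forall r', is_root E r' ==> (r' == r)],
    [forall w, (w != r) ==> (#|[set v | (v, w) \in E]| == 1)] &
    [forall w, connect (fun a b => (b, a) \in E) w r]]].

Definition children (n : nat) (E : {set 'I_n * 'I_n}) (v : 'I_n) : seq 'I_n :=
  enum [set w | (v, w) \in E].

(** sum_{j_1..j_k} G(c_1)_{j_1} ... G(c_k)_{j_k} d_{j_k} ... d_{j_1} h *)
Fixpoint sumprod (d n : nat) (cs : seq 'I_n) (G : 'I_n -> vec d -> vec d)
    (h : vec d -> R) : vec d -> R :=
  match cs with
  | [::] => h
  | c :: cs' => fun x => \sum_(j < d) G c x j * sumprod cs' G (partial j h) x
  end.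

(** F of the subtree rooted at v, computed with fuel m (m >= height suffices) *)
Fixpoint Fsub (d n : nat) (E : {set 'I_n * 'I_n}) (fs : 'I_n -> vec d -> vec d)
    (m : nat) (v : 'I_n) : vec d -> vec d :=
  match m with
  | 0 => fs v
  | m'.+1 => fun x k => sumprod (children E v) (Fsub E fs m') (fun y => fs v y k) x
  end.

Definition Ftree (d n : nat) (E : {set 'I_n * 'I_n}) (fs : 'I_n -> vec d -> vec d)
    : vec d -> vec d :=
  match [pick r | is_root E r] with
  | Some r => Fsub E fs n r
  | None => fun _ _ => 0
  end.

(** maps C_d -> C_d (codomain viewed inside functions R^d -> R^d) *)
Definition Op (d : nat) := Cd d -> vec d -> vec d.

Definition PhiTree (d n : nat) (E : {set 'I_n * 'I_n}) : Op d :=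
  fun f => Ftree E (fun _ => cd_fun f).

Definition inW (d n : nat) (Phi : Op d) : Prop :=
  exists c : {set 'I_n * 'I_n} -> R,
    forall f x k, Phi f x k = \sum_(E | is_rooted_tree E) c E * PhiTree E f x k.

Definition image_is_basis (d n : nat) (A : Type) (H : A -> Op d) : Prop :=
  (forall a, inW n (H a)) /\
  (forall Phi, inW n Phi -> exists m (a : 'I_m -> A) (c : 'I_m -> R),
      forall f x k, Phi f x k = \sum_(i < m) c i * H (a i) f x k) /\
  (forall m (a : 'I_m -> A) (c : 'I_m -> R),
      (forall i j, H (a i) = H (a j) -> i = j) ->
      (forall f x k, \sum_(i < m) c i * H (a i) f x k = 0) ->
      forall i, c i = 0).

Definition inMI (n : nat) (phi : 'I_n -> nat) : Prop :=
  (\sum_(i < n) phi i)%N = n.-1.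

Definition perm_equiv (n : nat) (phi psi : 'I_n -> nat) : Prop :=
  exists sigma : 'I_n -> 'I_n, bijective sigma /\ forall i, psi i = phi (sigma i).

(** g_hat(x) = (g(x_1), 0, ..., 0); i0 is the first coordinate *)
Definition ghat (d : nat) (i0 : 'I_d) (g : R -> R) : vec d -> vec d :=
  fun x k => if k == i0 then g (x i0) else 0.

Definition on_axis (d : nat) (i0 : 'I_d) (t : R) : vec d :=
  fun k => if k == i0 then t else 0.

(** pi_d(Phi)(g)(t) = G^n([phi])(g)(t), as maps on C^infty(R,R) *)
Definition pi_eq_G (d n : nat) (i0 : 'I_d) (Phi : Op d) (phi : 'I_n -> nat) : Prop :=
  forall g : R -> R, smooth1 g ->
  forall F : Cd d, (forall x, cd_fun F x = ghat i0 g x) ->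
  forall t : R, Phi F (on_axis i0 t) i0 = \prod_(v < n) derive1n (phi v) g t.

End Defs.

From HB Require Import structures.
From mathcomp Require Import all_boot all_order all_algebra.
From mathcomp Require Import all_classical all_reals all_analysis.
From mathcomp Require Import fingroup perm.
Set Implicit Arguments. Unset Strict Implicit. Unset Printing Implicit Defensive.
Import Order.TTheory GRing.Theory Num.Theory.

(** Take for [CD_d(n)] a maximal linearly independent set [B] of the operators [F(tau)],
    [tau] in [RT(n)]: it is a basis of [W^n_d]. Let [q] send [tau] to its out-degree
    sequence, which lies in [MI(n)] because a tree on [n] vertices has [n - 1] edges. On
    [f = ghat g], taken on the first axis, every derivative along another coordinate
    vanishes, so [F(tau)] collapses to the product of the [g^(outdeg v)]: this is
    [pi_d (H tau) = G (q tau)].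
    For the surjectivity of [q], every [phi] in [MI(n)] is, up to permutation, the
    out-degree sequence of some tree [tau] (sort the degrees decreasingly and give each
    vertex the next block of vertices as children). Expanding [F(tau)] in [B] and
    evaluating at [g(s) = sum_k y^((n+1)^k) s^k] yields a polynomial identity in [y] in
    which each tree contributes the monomial [y^(sum_v (n+1)^(outdeg v))]. The exponent
    determines the degree sequence up to permutation (its base [n+1] digits count the
    vertices of each degree), so the monomial of [tau] must also come from an element of
    [B] with the degree sequence of [phi]. *)

(** * Rooted trees *)

Section ConnectPaths.
Variables (T : finType) (e : rel T).

Lemma connect_last x y : connect e x y -> x != y -> exists2 z, connect e x z & e z y.
Proof.
move/connectP => [p]; elim/last_ind: p => [|p z _] /=; first by move=> _ ->; rewrite eqxx.
rewrite rcons_path last_rcons => /andP[pth ez] -> _.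
by exists (last x p) => //; apply/connectP; exists p.
Qed.

Lemma connect_first x y : connect e x y -> x != y -> exists2 z, e x z & connect e z y.
Proof.
move/connectP => [[|z p]] /=; first by move=> _ ->; rewrite eqxx.
by move=> /andP[exz pth] -> _; exists z => //; apply/connectP; exists p.
Qed.

Lemma connect_stable (S : pred T) x y :
  (forall a b, S a -> e a b -> S b) -> connect e x y -> S x -> S y.
Proof.
move=> stS /connectP [p]; elim: p x => [|z p IH] x /=; first by move=> _ ->.
by move=> /andP[exz pth] ey Sx; apply: (IH z pth ey); exact: stS Sx exz.
Qed.

End ConnectPaths.

Definition child_rel n (E : {set 'I_n * 'I_n}) : rel 'I_n := fun a b => (a, b) \in E.

Definition descendants n (E : {set 'I_n * 'I_n}) (v : 'I_n) : {set 'I_n} :=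
  [set w | connect (child_rel E) v w].

Definition outdeg n (E : {set 'I_n * 'I_n}) (v : 'I_n) : nat := size (children E v).

Lemma rooted_treeP n (E : {set 'I_n * 'I_n}) : is_rooted_tree E ->
  exists r, [/\ is_root E r, forall r', is_root E r' -> r' = r,
    forall w, w != r -> #|[set v | (v, w) \in E]| = 1%N &
    forall w, connect (fun a b => (b, a) \in E) w r].
Proof.
move/existsP => [r /and4P[rootr /forallP uniqr /forallP par1 /forallP conn]].
exists r; split => // [r' | w] h; apply/eqP.
  exact: implyP (uniqr r') h.
exact: implyP (par1 w) h.
Qed.

Section RootedTree.
Variables (n : nat) (E : {set 'I_n * 'I_n}) (r : 'I_n).
Hypothesis root_r : is_root E r.
Hypothesis parent1 : forall w, w != r -> #|[set v | (v, w) \in E]| = 1%N.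
Hypothesis to_root : forall w, connect (fun a b => (b, a) \in E) w r.

Local Notation child := (child_rel E).
Local Notation desc := (descendants E).

Lemma root_no_parent v : (v, r) \notin E.
Proof. by move/forallP: root_r. Qed.

Lemma parent_uniq u u' w : (u, w) \in E -> (u', w) \in E -> u = u'.
Proof.
move=> uw u'w.
have wr : w != r by apply: contraTneq uw => ->; rewrite (negbTE (root_no_parent u)).
have [x parw] := cards1P (introT eqP (parent1 wr)).
have : u \in [set v | (v, w) \in E] by rewrite inE.
have : u' \in [set v | (v, w) \in E] by rewrite inE.
by rewrite parw !inE => /eqP -> /eqP ->.
Qed.

Lemma child_not_ancestor v c : (v, c) \in E -> ~~ connect child c v.
Proof.
(* Following parents from [v] never leaves the cycle [S], yet it reaches the parentless root. *)
move=> vc; apply/negP => cv.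
pose S := [pred w | connect child c w && connect child w v].
have S_parent w : S w -> exists2 u, S u & (u, w) \in E.
  move=> /andP[cw wv]; have [<-|ncw] := eqVneq c w.
    by exists v => //; apply/andP.
  have [u cu uw] := connect_last cw ncw.
  exists u => //; apply/andP; split => //.
  exact: connect_trans (connect1 uw) wv.
have Sr : S r.
  apply: (connect_stable _ (to_root v)); last by apply/andP.
  move=> a b Sa ba; have [u Su ua] := S_parent a Sa.
  by rewrite (parent_uniq ba ua).
have [u _] := S_parent r Sr.
by rewrite (negbTE (root_no_parent u)).
Qed.

Lemma ancestors_comparable a b w : connect child a w -> connect child b w ->
  connect child a b || connect child b a.
Proof.
move/connectP => [p]; elim/last_ind: p w b => [|p z IH] w b /=.
  by move=> _ -> ->; rewrite orbT.
rewrite rcons_path last_rcons => /andP[pth ez] -> bz.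
have [->|nbz] := eqVneq b z.
  by apply/orP; left; apply: connect_trans (connect1 ez); apply/connectP; exists p.
have [u bu uz] := connect_last bz nbz.
rewrite -(parent_uniq ez uz) in bu.
exact: IH (last a p) b pth erefl bu.
Qed.

Lemma subtrees_disjoint v c1 c2 w : (v, c1) \in E -> (v, c2) \in E -> c1 != c2 ->
  connect child c1 w -> connect child c2 w -> False.
Proof.
move=> vc1 vc2 nc12 c1w c2w.
wlog c12 : c1 c2 vc1 vc2 nc12 c1w c2w / connect child c1 c2.
  move=> gen; case/orP: (ancestors_comparable c1w c2w) => h; first exact: (gen c1 c2).
  by apply: (gen c2 c1) => //; rewrite eq_sym.
have [u c1u uc2] := connect_last c12 nc12.
rewrite (parent_uniq uc2 vc2) in c1u.
by move: (child_not_ancestor vc1); rewrite c1u.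
Qed.

Lemma mem_descendants_root w : w \in desc r.
Proof. by rewrite inE -[connect _ _ _](connect_rev child); exact: to_root. Qed.

Lemma descendants_rec v w :
  (w \in desc v : nat) = ((w == v) + \sum_(c <- children E v) (w \in desc c : nat))%N.
Proof.
rewrite /children big_enum /=.
have [->|nwv] := eqVneq w v.
  rewrite !inE connect0 big1 // => c; rewrite inE => vc.
  by rewrite inE (negbTE (child_not_ancestor vc)).
rewrite add0n inE; have [vw|nvw] /= := boolP (connect child v w).
  rewrite eq_sym in nwv; have [c0 vc0 c0w] := connect_first vw nwv.
  rewrite (bigD1 c0) ?inE //= c0w big1 // => c /andP[].
  rewrite !inE => vc nc; apply/eqP; rewrite eqb0; apply/negP => cw.
  exact: (subtrees_disjoint vc vc0 nc cw c0w).
rewrite big1 // => c; rewrite !inE => vc; apply/eqP; rewrite eqb0.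
by apply: contra nvw; apply: connect_trans (connect1 vc).
Qed.

Local Open Scope ring_scope.

Lemma prod_descendants (S : comPzSemiRingType) (F : 'I_n -> S) v :
  \prod_(w in desc v) F w = F v * \prod_(c <- children E v) \prod_(w in desc c) F w.
Proof.
have prodXmem (A : {set 'I_n}) : \prod_(w in A) F w = \prod_w F w ^+ (w \in A).
  by rewrite big_mkcond; apply: eq_bigr => w _; case: (w \in A).
rewrite prodXmem; under [X in _ = _ * X]eq_bigr do rewrite prodXmem.
under eq_bigr do rewrite descendants_rec exprD expr_sum.
rewrite big_split /= exchange_big /=; congr (_ * _).
by rewrite (bigD1 v) //= eqxx big1 ?mulr1 // => w /negbTE ->.
Qed.

Lemma card_descendants_lt v c : (v, c) \in E -> (#|desc c| < #|desc v|)%N.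
Proof.
move=> vc; apply: proper_card; apply/properP; split.
  by apply/fintype.subsetP => w; rewrite !inE; apply: connect_trans (connect1 vc).
by exists v; rewrite !inE ?connect0 // (negbTE (child_not_ancestor vc)).
Qed.

End RootedTree.

Lemma card_set_sum (T : finType) (P : pred T) : #|[set x | P x]| = \sum_x P x.
Proof.
by rewrite -sum1_card big_mkcond; apply: eq_bigr => x _; rewrite inE; case: (P x).
Qed.

Lemma sum_outdeg n (E : {set 'I_n * 'I_n}) : is_rooted_tree E ->
  \sum_(v < n) outdeg E v = n.-1.
Proof.
move=> /rooted_treeP [r [root_r _ parent1 _]].
under eq_bigr do rewrite /outdeg /children -cardE card_set_sum.
rewrite exchange_big (bigD1 r) //= big1 => [|v _]; last first.
  by rewrite (negbTE (root_no_parent root_r v)).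
rewrite add0n (eq_bigr (fun _ => 1%N)) => [|w /parent1 <-]; last by rewrite card_set_sum.
by rewrite sum1_card cardC1 card_ord.
Qed.

(** * Trees with a prescribed degree sequence *)

Lemma card_interval n a b : a <= b < n -> #|[set w : 'I_n | a < w <= b]| = b - a.
Proof.
case/andP => ab bn.
have -> : b - a = \sum_(a.+1 <= w < b.+1) 1 by rewrite sum_nat_const_nat muln1 subSS.
rewrite (big_nat_widen _ _ _ _ _ bn) big_geq_mkord -sum1_card.
by apply: eq_bigl => w; rewrite inE ltnS andbC.
Qed.

Lemma rooted_tree_of_parent n (p : 'I_n.+1 -> 'I_n.+1) :
  (forall w, w != ord0 -> p w < w) ->
  is_rooted_tree [set e | (e.1 == p e.2) && (e.2 != ord0)].
Proof.
set E := [set e | _]; move=> p_lt; apply/existsP; exists ord0; apply/and4P; split.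
- by apply/forallP => v; rewrite inE /= andbF.
- apply/forallP => r; apply/implyP => /forallP root_r; apply/negPn/negP => nr.
  by move: (root_r (p r)); rewrite inE /= eqxx nr.
- apply/forallP => w; apply/implyP => nw; apply/eqP.
  rewrite (_ : [set v | _] = [set p w]) ?cards1 //.
  by apply/setP => v; rewrite !inE /= nw andbT.
- have to_root k (w : 'I_n.+1) : w < k -> connect (fun a b => (b, a) \in E) w ord0.
    elim: k w => // k IH w wk; have [->|nw] := eqVneq w ord0; first exact: connect0.
    apply: connect_trans (connect1 _) (IH (p w) _); first by rewrite inE /= eqxx nw.
    by apply: leq_trans (p_lt _ nw) _; rewrite -ltnS.
  by apply/forallP => w; apply: to_root (ltnSn w).
Qed.

Section DegreeTree.
Variables (n : nat) (deg : nat -> nat).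
Hypothesis deg_nonincr : forall i j, i <= j <= n -> deg j <= deg i.
Hypothesis sum_deg : \sum_(0 <= l < n.+1) deg l = n.

(* The children of vertex [i] are the vertices of the block (psum i, psum i.+1];
   [block_of w] is the vertex whose block contains [w]. *)
Definition psum k := \sum_(0 <= l < k) deg l.

Lemma psum_mono : {homo psum : i j / i <= j}.
Proof. by move=> i j ij; rewrite /psum (big_cat_nat (leq0n i) ij) /= leq_addr. Qed.

Lemma psumS k : psum k.+1 = psum k + deg k.
Proof. by rewrite /psum big_nat_recr. Qed.

Lemma psum_last : psum n.+1 = n.
Proof. exact: sum_deg. Qed.

Lemma psum_ge w : 0 < w <= n -> w <= psum w.
Proof.
case/andP => w0 wn; have [deg0|deg_pos] := posnP (deg w.-1).
  have tail0 : \sum_(w <= l < n.+1) deg l = 0.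
    rewrite big_nat_cond big1 // => l /andP[/andP[wl ln] _]; apply/eqP.
    by rewrite -leqn0 -deg0 deg_nonincr // (leq_trans (leq_pred w) wl) -ltnS.
  have w_le : w <= n.+1 by rewrite (leq_trans wn).
  apply: leq_trans wn _; rewrite -[n in n <= _]psum_last /psum.
  by rewrite (big_cat_nat (leq0n w) w_le) /= tail0 addn0.
rewrite /psum big_mkord -[w in w <= _]card_ord -sum1_card; apply: leq_sum => l _.
apply: leq_trans deg_pos (deg_nonincr _).
by rewrite -ltnS prednK // ltn_ord (leq_trans (leq_pred w) wn).
Qed.

Definition block_of w := find (fun i => w <= psum i.+1) (iota 0 n.+1).

Lemma block_ofP w : 0 < w <= n ->
  [/\ psum (block_of w) < w, w <= psum (block_of w).+1 & block_of w < w].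
Proof.
case/andP => w0 wn; pose in_block i := w <= psum i.+1.
have has_block : has in_block (iota 0 n.+1).
  by apply/hasP; exists n; rewrite ?mem_iota /in_block //= psum_last.
have lt_n : block_of w < n.+1 by rewrite -[n.+1](size_iota 0) -has_find.
have w_le : w <= psum (block_of w).+1 by have := nth_find 0 has_block; rewrite nth_iota.
split => //.
- move: lt_n; rewrite /block_of; case e: find => [|k] lt_n; first by rewrite /psum big_geq.
  have := @before_find _ 0 in_block (iota 0 n.+1) k.
  rewrite e ltnSn nth_iota ?add0n ?(ltnW lt_n) // /in_block => /(_ isT)/negbT.
  by rewrite -ltnNge.
- rewrite ltnNge; apply/negP => le_w.
  have w1_lt : w.-1 < n.+1 by rewrite ltnS (leq_trans (leq_pred w) wn).
  have w1_find : w.-1 < block_of w by rewrite prednK.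
  have := before_find 0 w1_find.
  by rewrite nth_iota // add0n /in_block prednK // psum_ge ?w0.
Qed.

Lemma block_ofE w (i : 'I_n.+1) : 0 < w <= n ->
  (block_of w == i) = (psum i < w <= psum i.+1).
Proof.
move=> w_range; have [lt_w w_le _] := block_ofP w_range.
apply/eqP/andP => [<-//|[lt_w' w_le']].
have [lt_i|gt_i|//] := ltngtP (block_of w) i.
  by move: (leq_trans w_le (psum_mono lt_i)); rewrite leqNgt lt_w'.
by have := before_find 0 gt_i; rewrite nth_iota ?add0n ?w_le'.
Qed.

Definition degree_parent (w : 'I_n.+1) : 'I_n.+1 := inord (block_of w).

Definition degree_tree : {set 'I_n.+1 * 'I_n.+1} :=
  [set e | (e.1 == degree_parent e.2) && (e.2 != ord0)].

Lemma nonroot_range (w : 'I_n.+1) : w != ord0 -> 0 < w <= n.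
Proof.
move=> nw; rewrite -[w <= n]ltnS ltn_ord andbT lt0n.
by apply: contraNneq nw => w0; apply/eqP/val_inj.
Qed.

Lemma degree_parent_val (w : 'I_n.+1) : w != ord0 -> degree_parent w = block_of w :> nat.
Proof.
move=> /nonroot_range w_range; have [_ _ lt_w] := block_ofP w_range.
by rewrite inordK // (ltn_trans lt_w).
Qed.

Lemma degree_tree_rooted : is_rooted_tree degree_tree.
Proof.
apply: rooted_tree_of_parent => w nw; rewrite degree_parent_val //.
by have [] := block_ofP (nonroot_range nw).
Qed.

Lemma outdeg_degree_tree (i : 'I_n.+1) : outdeg degree_tree i = deg i.
Proof.
rewrite /outdeg /children -cardE.
have -> : [set w | (i, w) \in degree_tree] = [set w : 'I_n.+1 | psum i < w <= psum i.+1].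
  apply/setP => w; rewrite !inE /=; have [->|nw] := eqVneq w ord0; first by rewrite andbF.
  by rewrite andbT eq_sym -val_eqE /= degree_parent_val // block_ofE // nonroot_range.
rewrite card_interval psumS ?addKn // leq_addr -psumS ltnS -[n in _ <= n]psum_last.
exact: psum_mono.
Qed.

End DegreeTree.

Lemma perm_equiv_perm n (phi : 'I_n -> nat) (s : 'S_n) : perm_equiv phi (phi \o s).
Proof. by exists s; split => //; exists s^-1%g => x; [exact: permK | exact: permKV]. Qed.

Lemma exists_tree_outdeg n (phi : 'I_n -> nat) : 0 < n -> inMI phi ->
  exists2 E, is_rooted_tree E & perm_equiv phi (outdeg E).
Proof.
case: n phi => [//|n] phi _ phiMI.
pose s := sort geq [tuple phi i | i < n.+1].
have [sg s_def] := tuple_permP (permEl (perm_sort geq [tuple phi i | i < n.+1])).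
have deg_phi (i : 'I_n.+1) : nth 0 s i = phi (sg i).
  by rewrite /s s_def -tnth_nth !tnth_mktuple.
have deg_nonincr i j : i <= j <= n -> nth 0 s j <= nth 0 s i.
  case/andP => ij jn; have size_s : size s = n.+1 by rewrite size_sort size_tuple.
  have geq_trans : transitive geq by move=> y x z xy yz; exact: leq_trans yz xy.
  have s_sorted : sorted geq s by apply: sort_sorted => a b; exact: leq_total.
  have [i_lt j_lt] : i < n.+1 /\ j < n.+1 by rewrite !ltnS jn (leq_trans ij).
  by apply: (sorted_leq_nth geq_trans leqnn 0 s_sorted); rewrite ?inE ?size_s.
have sum_deg : \sum_(0 <= l < n.+1) nth 0 s l = n.
  rewrite big_mkord (eq_bigr _ (fun i _ => deg_phi i)); apply: etrans phiMI.
  by rewrite [RHS](reindex_inj (@perm_inj _ sg)).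
exists (degree_tree n (nth 0 s)); first exact: degree_tree_rooted.
have -> : outdeg (degree_tree n (nth 0 s)) = phi \o sg.
  by apply/funext => i; rewrite outdeg_degree_tree // deg_phi.
exact: perm_equiv_perm.
Qed.

(** * Kronecker encoding of degree sequences *)

Lemma expansion_inj B N (a b : nat -> nat) : 0 < B ->
  (forall k, a k < B) -> (forall k, b k < B) ->
  \sum_(k < N) a k * B ^ k = \sum_(k < N) b k * B ^ k ->
  forall k, k < N -> a k = b k.
Proof.
move=> B_gt0; elim: N a b => [//|N IH] a b a_lt b_lt.
have split_low (c : nat -> nat) :
    \sum_(k < N.+1) c k * B ^ k = (\sum_(k < N) c k.+1 * B ^ k) * B + c 0.
  rewrite big_ord_recl muln1 addnC big_distrl; congr (_ + _).
  by apply: eq_bigr => k _; rewrite expnSr mulnA.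
rewrite !split_low => eq_ab [|k] kN.
  by have := congr1 (modn^~ B) eq_ab; rewrite !modnMDl !modn_small.
apply: (IH _ _ (fun j => a_lt j.+1) (fun j => b_lt j.+1)) => //.
by have := congr1 (divn^~ B) eq_ab; rewrite !divnMDl // !divn_small // !addn0.
Qed.

Lemma sum_expn_count (s : seq nat) N B : all (gtn N) s ->
  \sum_(x <- s) B ^ x = \sum_(k < N) count_mem (k : nat) s * B ^ k.
Proof.
elim: s => [|a s IH] /=; first by rewrite big_nil big1.
case/andP => aN /IH sum_s; rewrite big_cons sum_s.
under [RHS]eq_bigr do rewrite [count _ _]/= mulnDl.
rewrite big_split /=; congr (_ + _).
rewrite (bigD1 (Ordinal aN)) //= eqxx mul1n big1 ?addn0 // => k /negbTE nk.
by rewrite eq_sym -val_eqE /= in nk; rewrite nk.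
Qed.

Lemma inMI_lt n (psi : 'I_n -> nat) v : inMI psi -> psi v < n.
Proof.
move=> psiMI; have : psi v <= n.-1 by rewrite -psiMI (bigD1 v) //= leq_addr.
by move/leq_ltn_trans; apply; rewrite prednK // (leq_ltn_trans _ (ltn_ord v)).
Qed.

Definition kronecker_code n (psi : 'I_n -> nat) : nat := \sum_(v < n) n.+1 ^ psi v.

Lemma kronecker_code_perm n (phi psi : 'I_n -> nat) :
  perm_equiv phi psi -> kronecker_code phi = kronecker_code psi.
Proof.
case=> sg [/bij_inj sg_inj psi_phi]; rewrite /kronecker_code (reindex_inj sg_inj).
by apply: eq_bigr => v _; rewrite psi_phi.
Qed.

Lemma kronecker_code_digits n (psi : 'I_n -> nat) : inMI psi ->
  kronecker_code psi = \sum_(k < n) count_mem (k : nat) [tuple psi i | i < n] * n.+1 ^ k.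
Proof.
move=> psiMI; rewrite -sum_expn_count.
  by rewrite big_tuple; apply: eq_bigr => i _; rewrite tnth_mktuple.
by apply/allP => _ /tnthP [i ->]; rewrite tnth_mktuple /= inMI_lt.
Qed.

Lemma kronecker_code_inj n (phi psi : 'I_n -> nat) : inMI phi -> inMI psi ->
  kronecker_code phi = kronecker_code psi -> perm_equiv phi psi.
Proof.
move=> phiMI psiMI eq_code.
have count_lt (f : 'I_n -> nat) k : count_mem k [tuple f i | i < n] < n.+1.
  by rewrite ltnS -[n in _ <= n](size_tuple [tuple f i | i < n]) count_size.
have count_eq k : count_mem k [tuple phi i | i < n] = count_mem k [tuple psi i | i < n].
  have [kn|nk] := ltnP k n.
    apply: (expansion_inj _ (count_lt phi) (count_lt psi) _ kn) => //.
    by rewrite -!kronecker_code_digits.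
  have notin (f : 'I_n -> nat) : inMI f -> k \notin [tuple f i | i < n].
    move=> fMI; apply/tnthP => -[i]; rewrite tnth_mktuple => k_fi.
    by move: (inMI_lt i fMI); rewrite -k_fi ltnNge nk.
  by rewrite !(count_memPn (notin _ _)).
have perm_tuples : perm_eq [tuple psi i | i < n] [tuple phi i | i < n].
  by apply/allP => x _; rewrite /= count_eq.
have [sg psi_sg] := tuple_permP perm_tuples.
have -> : psi = phi \o sg.
  apply/funext => i; have := congr1 (nth 0 ^~ i) psi_sg.
  by rewrite -!tnth_nth !tnth_mktuple.
exact: perm_equiv_perm.
Qed.

(** * Elementary differentials along a coordinate axis *)

Local Open Scope ring_scope.

Lemma derive1_shift (R : realType) (f : R -> R) a :
  derive1 (fun t => f (a + t)) 0 = derive1 f a.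
Proof. by rewrite /derive1; under eq_fun do rewrite addr0 addr0 (addrC a). Qed.

Lemma derive1n_cst0 (R : realType) m : derive1n m (fun _ : R => 0 : R) = (fun _ => 0).
Proof.
elim: m => [//|m IH]; rewrite derive1nS IH.
by apply/funext => t; exact: derive1_cst.
Qed.

Section Axis.
Variables (R : realType) (d : nat) (i0 : 'I_d).

Lemma partial_axis (h : R -> R) (j : 'I_d) :
  partial j (fun y : vec R d => h (y i0)) =
  fun y => if j == i0 then derive1 h (y i0) else 0.
Proof.
apply/funext => y; rewrite /partial /upd.
have [_|nj] := eqVneq j i0; first exact: derive1_shift.
exact: derive1_cst.
Qed.

Lemma sumprod_axis n (cs : seq 'I_n) (G : 'I_n -> vec R d -> vec R d)
    (u : 'I_n -> R -> R) (h : R -> R) x :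
  {in cs, forall c y j, G c y j = if j == i0 then u c (y i0) else 0} ->
  sumprod cs G (fun y => h (y i0)) x =
  (\prod_(c <- cs) u c (x i0)) * derive1n (size cs) h (x i0).
Proof.
elim: cs h => [|c cs IH] h Gaxis /=; first by rewrite big_nil mul1r.
rewrite (bigD1 i0) //= big1 ?addr0 => [|j /negbTE nj]; last first.
  by rewrite Gaxis ?mem_head // nj mul0r.
rewrite Gaxis ?mem_head // eqxx partial_axis eqxx IH; last first.
  by move=> c' c'cs; apply: Gaxis; rewrite in_cons c'cs orbT.
by rewrite big_cons -derive1nS derive1Sn mulrA.
Qed.

Section OnTree.
Variables (n : nat) (E : {set 'I_n * 'I_n}) (r : 'I_n).
Hypothesis root_r : is_root E r.
Hypothesis parent1 : forall w, w != r -> #|[set v | (v, w) \in E]| = 1%N.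
Hypothesis to_root : forall w, connect (fun a b => (b, a) \in E) w r.

Lemma Fsub_ghat (g : R -> R) m v x k : (#|descendants E v| <= m)%N ->
  Fsub E (fun _ => ghat i0 g) m v x k =
  if k == i0 then \prod_(w in descendants E v) derive1n (outdeg E w) g (x i0) else 0.
Proof.
elim: m v x k => [|m IH] v x k size_v.
  by move: size_v; rewrite leqn0 => /eqP/cards0_eq/setP/(_ v); rewrite !inE connect0.
rewrite /= (prod_descendants root_r parent1 to_root).
have -> : (fun y => ghat i0 g y k) =
          (fun y : vec R d => (if k == i0 then g else (fun _ => 0)) (y i0)).
  by apply/funext => y; rewrite /ghat; case: (k == i0).
rewrite (@sumprod_axis _ _ _ (fun c s => \prod_(w in descendants E c)
    derive1n (outdeg E w) g s)) => [|c vc y j]; last first.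
  apply: IH; rewrite -ltnS (leq_trans _ size_v) //.
  apply: (card_descendants_lt root_r parent1 to_root).
  by rewrite /children mem_enum inE in vc.
by case: (k == i0); rewrite ?derive1n_cst0 ?mulr0 // mulrC.
Qed.

End OnTree.

Lemma PhiTree_ghat n (E : {set 'I_n * 'I_n}) (g : R -> R) (F : Cd R d) t :
  is_rooted_tree E -> (forall x, F x = ghat i0 g x) ->
  PhiTree E F (on_axis i0 t) i0 = \prod_(v < n) derive1n (outdeg E v) g t.
Proof.
move=> /rooted_treeP [r [root_r root_uniq parent1 to_root]] Fghat.
rewrite /PhiTree /Ftree (_ : cd_fun F = ghat i0 g); last exact/funext.
case: pickP => [r' /root_uniq ->|/(_ r)]; last by rewrite root_r.
rewrite (Fsub_ghat root_r parent1 to_root) ?(eqxx i0); last first.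
  by rewrite -[n in (_ <= n)%N]card_ord max_card.
rewrite (_ : on_axis i0 t i0 = t); last by rewrite /on_axis eqxx.
by apply: eq_bigl => w; rewrite (mem_descendants_root to_root).
Qed.

End Axis.

Section PolynomialOnAxis.
Variables (R : realType) (d : nat) (i0 : 'I_d).

Lemma partials_poly_axis (q : {poly R}) js : exists q' : {poly R},
  partials js (fun y : vec R d => q.[y i0]) = fun y => q'.[y i0].
Proof.
elim: js => [|j js [q' IH]]; first by exists q.
exists (if j == i0 then q'^`() else 0).
rewrite /partials /= -/(partials js _) IH partial_axis.
by apply/funext => y; case: (j == i0); rewrite ?horner0 // -derivE.
Qed.

Lemma cont_poly_axis (q : {poly R}) x : cont_at (fun y : vec R d => q.[y i0]) x.
Proof.
move=> e e_gt0; have /cvgrPdist_lt/(_ e e_gt0)/nbhs_ballP[del /= del_gt0 near_x] :=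
  @continuous_horner R q (x i0).
by exists del => // y y_near; rewrite distrC; apply: near_x; rewrite /ball_ /= distrC.
Qed.

Lemma derivable_poly_axis (q : {poly R}) x j :
  derivable (fun t => q.[upd x j t i0]) 0 1.
Proof.
rewrite /upd; case: (i0 == j); last exact: derivable_cst.
have -> : (fun t => q.[x i0 + t]) = horner (q \Po ('X + (x i0)%:P)).
  by apply/funext => t; rewrite horner_comp hornerD hornerX hornerC addrC.
exact: derivable_horner.
Qed.

Lemma smooth_poly_axis (q : {poly R}) : smooth_scalar (fun y : vec R d => q.[y i0]).
Proof.
move=> js x; have [q' ->] := partials_poly_axis q js.
by split=> [|j]; [exact: cont_poly_axis | exact: derivable_poly_axis].
Qed.

Lemma smooth_ghat_poly (p : {poly R}) : smooth (ghat i0 (horner p)).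
Proof.
move=> k; have -> : (fun x => ghat i0 (horner p) x k) =
    (fun y : vec R d => (if k == i0 then p else 0).[y i0]).
  by apply/funext => y; rewrite /ghat; case: (k == i0); rewrite ?horner0.
exact: smooth_poly_axis.
Qed.

Definition ghat_poly (p : {poly R}) : Cd R d := MkCd (smooth_ghat_poly p).

End PolynomialOnAxis.

Lemma derive1n_horner (R : realType) (p : {poly R}) m :
  derive1n m (horner p) = horner (p^`(m)).
Proof.
elim: m => [|m IH]; first by rewrite derivn0.
by rewrite derive1nS IH -derivE derivnS.
Qed.

(* For [m < n] its [m]-th derivative at [0] is [m`! * y ^+ (n.+1 ^ m)], so a product of
   such derivatives records the orders of differentiation in the exponent of [y]. *)
Definition kronecker_poly (R : realType) n (y : R) : {poly R} :=
  \poly_(k < n) y ^+ (n.+1 ^ k).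

Lemma prod_derive1n_kronecker (R : realType) n (y : R) (psi : 'I_n -> nat) : inMI psi ->
  \prod_(v < n) derive1n (psi v) (horner (kronecker_poly n y)) 0 =
  (\prod_(v < n) (psi v)`!%:R) * y ^+ kronecker_code psi.
Proof.
move=> psiMI; rewrite /kronecker_code -prodrXr -big_split /=; apply: eq_bigr => v _.
rewrite derive1n_horner horner_coef0 coef_derivn addn0 ffactnn coef_poly inMI_lt //.
by rewrite mulr_natl.
Qed.

Lemma PhiTree_kronecker (R : realType) d (i0 : 'I_d) n (E : {set 'I_n * 'I_n}) (y : R) :
  is_rooted_tree E ->
  PhiTree E (ghat_poly i0 (kronecker_poly n y)) (on_axis i0 0) i0 =
  (\prod_(v < n) (outdeg E v)`!%:R) * y ^+ kronecker_code (outdeg E).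
Proof.
move=> tree; rewrite (PhiTree_ghat (g := horner (kronecker_poly n y))) //.
exact/prod_derive1n_kronecker/sum_outdeg.
Qed.

(** * Linear independence of families of operators *)

Lemma monomial_notin_span (R : numDomainType) (I : finType) (A : pred I) (K : R)
    (e0 : nat) (e : I -> nat) (mu : I -> R) :
  (forall i, A i -> e i != e0) ->
  (forall y, K * y ^+ e0 = \sum_(i in A) mu i * y ^+ e i) -> K = 0.
Proof.
move=> e_neq eq_mono.
pose p : {poly R} := K *: 'X^e0 - \sum_(i in A) mu i *: 'X^(e i).
have p0 : p = 0.
  apply: (@roots_geq_poly_eq0 _ _ [seq i%:R | i <- iota 0 (size p)]).
  - apply/allP => _ /mapP[i _ ->]; rewrite /root /p hornerD hornerN hornerZ hornerXn.
    rewrite horner_sum eq_mono subr_eq0; apply/eqP/eq_bigr => j _.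
    by rewrite hornerZ hornerXn.
  - by rewrite map_inj_uniq ?iota_uniq //; apply: mulrIn; exact: oner_neq0.
  - by rewrite size_map size_iota.
have := congr1 (fun q : {poly R} => q`_e0) p0.
rewrite coef0 coefB coefZ coefXn eqxx mulr1 coef_sum big1 ?subr0 // => i Ai.
by rewrite coefZ coefXn eq_sym (negbTE (e_neq i Ai)) mulr0.
Qed.

Section IndependentFamily.
Variables (R : realType) (d : nat) (T : finType) (Phi : T -> Op R d).

Definition lin_indep (B : {set T}) : Prop :=
  forall c : T -> R, (forall f x k, \sum_(t in B) c t * Phi t f x k = 0) ->
  forall t, t \in B -> c t = 0.

Lemma lin_indep_family B m (a : 'I_m -> T) (c : 'I_m -> R) : lin_indep B ->
  injective a -> (forall i, a i \in B) ->
  (forall f x k, \sum_(i < m) c i * Phi (a i) f x k = 0) -> forall i, c i = 0.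
Proof.
move=> indepB a_inj aB sum0 i.
pose c' t := \sum_(j < m | a j == t) c j.
have : c' (a i) = 0.
  apply: indepB (aB i) => f x k; rewrite -[RHS](sum0 f x k).
  under eq_bigr => t _ do rewrite /c' mulr_suml big_mkcond /=.
  rewrite exchange_big /=; apply: eq_bigr => j _.
  rewrite (bigD1 (a j)) ?aB //= eqxx big1 ?addr0 // => t /andP[_ /negbTE].
  by rewrite eq_sym => ->.
by rewrite /c' (big_pred1 i) // => j; rewrite /= (inj_eq a_inj).
Qed.

Variable A : {set T}.

Definition indep_in (B : {set T}) : bool := (B \subset A) && `[< lin_indep B >].

Lemma indep_in0 : indep_in finset.set0.
Proof. by rewrite /indep_in finset.sub0set; apply/asboolP => c _ t; rewrite inE. Qed.

Definition max_indep : {set T} := s2val (maxset_exists indep_in0).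

Lemma max_indepP : maxset indep_in max_indep.
Proof. exact: (s2valP (maxset_exists indep_in0)). Qed.

Lemma max_indep_sub : max_indep \subset A.
Proof. by have /maxsetP[/andP[]] := max_indepP. Qed.

Lemma max_indep_indep : lin_indep max_indep.
Proof. by have /maxsetP[/andP[_ /asboolP]] := max_indepP. Qed.

Lemma max_indep_span t : t \in A -> exists lam : T -> R,
  forall f x k, Phi t f x k = \sum_(b in max_indep) lam b * Phi b f x k.
Proof.
move=> tA; set B := max_indep.
have [tB|tNB] := boolP (t \in B).
  exists (fun b => (b == t)%:R) => f x k; rewrite (bigD1 t) //= eqxx mul1r big1 ?addr0 //.
  by move=> b /andP[_ /negbTE ->]; rewrite mul0r.
have dep_tB : ~ lin_indep (t |: B).
  move=> indep_tB; have /maxsetP[_ maxB] := max_indepP.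
  have := maxB (t |: B); rewrite /indep_in finset.subUset finset.sub1set tA max_indep_sub.
  rewrite finset.subsetUr.
  by move/(_ (asboolT indep_tB) isT)/setP/(_ t); rewrite !inE eqxx (negbTE tNB).
have [c rel ct_neq0] : exists2 c : T -> R,
    (forall f x k, \sum_(b in t |: B) c b * Phi b f x k = 0) & c t != 0.
  apply: contra_notP dep_tB => no_c c rel.
  have ct0 : c t = 0 by apply/eqP; apply: contra_notT no_c => ct; exists c.
  have relB f x k : \sum_(b in B) c b * Phi b f x k = 0.
    by have := rel f x k; rewrite big_setU1 //= ct0 mul0r add0r.
  move=> b /setU1P[-> //|bB]; exact: max_indep_indep relB b bB.
exists (fun b => - (c b / c t)) => f x k; apply: (mulfI ct_neq0).
have := rel f x k; rewrite big_setU1 //= => /eqP; rewrite addr_eq0 => /eqP ->.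
rewrite mulr_sumr -sumrN; apply: eq_bigr => b _.
by rewrite mulrA mulrN mulrCA divff // mulr1 mulNr.
Qed.

Lemma span_max_indep (c : T -> R) : exists lam : T -> R, forall f x k,
  \sum_(t in A) c t * Phi t f x k = \sum_(b in max_indep) lam b * Phi b f x k.
Proof.
have /choice[lam lamP] : forall t, exists lam : T -> R, t \in A ->
    forall f x k, Phi t f x k = \sum_(b in max_indep) lam b * Phi b f x k.
  move=> t; have [/max_indep_span[lam lamP]|_] := boolP (t \in A); first by exists lam.
  by exists (fun=> 0).
exists (fun b => \sum_(t in A) c t * lam t b) => f x k.
under eq_bigr => t tA do rewrite (lamP t tA f x k) mulr_sumr.
rewrite exchange_big /=; apply: eq_bigr => b _; rewrite mulr_suml.
by apply: eq_bigr => t _; rewrite mulrA.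
Qed.

End IndependentFamily.

(** * The tree basis *)

Section TreeBasis.
Variables (R : realType) (d n : nat).

Definition tree_basis : {set {set 'I_n * 'I_n}} :=
  max_indep (@PhiTree R d n) [set E | is_rooted_tree E].

Lemma tree_basis_rooted E : E \in tree_basis -> is_rooted_tree E.
Proof. by move/(fintype.subsetP (max_indep_sub _ _)); rewrite inE. Qed.

Lemma tree_basis_is_basis :
  image_is_basis n (fun i : 'I_#|tree_basis| => @PhiTree R d n (enum_val i)).
Proof.
split; [|split].
- move=> i; exists (fun E => (E == enum_val i)%:R) => f x k.
  rewrite (bigD1 (enum_val i)) ?tree_basis_rooted ?enum_valP //= eqxx mul1r.
  by rewrite big1 ?addr0 // => E /andP[_ /negbTE ->]; rewrite mul0r.
- move=> Phi [c Phi_c].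
  have [lam span] := span_max_indep (@PhiTree R d n) [set E | is_rooted_tree E] c.
  exists #|tree_basis|, id, (fun i => lam (enum_val i)) => f x k.
  rewrite Phi_c (eq_bigl (fun E => E \in [set E | is_rooted_tree E])) => [|E]; last first.
    by rewrite inE.
  by rewrite span big_enum_val.
- move=> m a c H_inj sum0.
  apply: (@lin_indep_family R d _ _ tree_basis m (enum_val \o a) c _ _ _ sum0).
  + exact: max_indep_indep.
  + by move=> i j /= /(congr1 (@PhiTree R d n))/H_inj.
  + by move=> i; exact: enum_valP.
Qed.

Lemma tree_basis_outdeg_surj (i0 : 'I_d) (phi : 'I_n -> nat) : (0 < n)%N -> inMI phi ->
  exists2 E, E \in tree_basis & perm_equiv phi (outdeg E).
Proof.
move=> n_gt0 phiMI; have [E0 tree0 phi_E0] := exists_tree_outdeg n_gt0 phiMI.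
have [lam E0_span] : exists lam : {set 'I_n * 'I_n} -> R, forall (f : Cd R d) x k,
    PhiTree E0 f x k = \sum_(b in tree_basis) lam b * PhiTree b f x k.
  by apply: max_indep_span; rewrite inE.
pose K (E : {set 'I_n * 'I_n}) : R := \prod_(v < n) (outdeg E v)`!%:R.
have K0_neq0 : K E0 != 0.
  by rewrite /K -natr_prod pnatr_eq0 -lt0n prodn_gt0 // => v; exact: fact_gt0.
apply: contra_notP (elimN eqP K0_neq0) => no_E.
apply: (@monomial_notin_span _ _ (mem tree_basis) _ (kronecker_code (outdeg E0))
          (fun E => kronecker_code (outdeg E)) (fun E => lam E * K E)).
  move=> E EB; apply/eqP => code_eq; apply: no_E; exists E => //.
  apply: kronecker_code_inj phiMI (sum_outdeg (tree_basis_rooted EB)) _.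
  by rewrite code_eq; exact: kronecker_code_perm.
move=> y; rewrite -(PhiTree_kronecker i0) // E0_span ?inE //; apply: eq_bigr => E EB.
by rewrite (PhiTree_kronecker i0) ?tree_basis_rooted // mulrA.
Qed.

End TreeBasis.

Theorem theorem6p7 (R : realType) (d : nat) (hd : (0 < d)%N) :
  exists (CD : nat -> Type) (H : forall n, CD n -> Op R d)
         (q : forall n, CD n -> 'I_n -> nat),
    forall n : nat, (0 < n)%N ->
      image_is_basis n (H n) /\
      (forall a : CD n, inMI (q n a)) /\
      (forall phi : 'I_n -> nat, inMI phi ->
         exists a : CD n, perm_equiv phi (q n a)) /\
      (forall a : CD n, pi_eq_G (Ordinal hd) (H n a) (q n a)).
Proof.
exists (fun n => 'I_#|tree_basis R d n|), (fun n i => PhiTree (enum_val i)),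
  (fun n i => outdeg (enum_val i)) => n n_gt0.
have rooted (i : 'I_#|tree_basis R d n|) := tree_basis_rooted (enum_valP i).
split; [exact: tree_basis_is_basis | split; [|split]].
- by move=> i; exact/sum_outdeg/rooted.
- move=> phi /(tree_basis_outdeg_surj R (Ordinal hd) n_gt0)[E EB phi_E].
  by exists (enum_rank_in EB E); rewrite enum_rankK_in.
- by move=> i g _ F F_ghat t; exact: PhiTree_ghat (rooted i) F_ghat.
Qed.
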